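(* Let $Q$ be an automorphic loop of nilpotency class $3$, and let $a,b,c,d\in Q$. (i) If $(a,c,d),(b,c,d)\in Z(Q)$ then $(ab,c,d)=(a,c,d)(b,c,d)$. (ii) If $(a,b,d),(a,c,d)\in Z(Q)$ then $(a,bc,d)=(a,b,d)(a,c,d)$. (iii) If $(a,b,c),(a,b,d)\in Z(Q)$ then $(a,b,cd)=(a,b,c)(a,b,d)$.
   Context: A loop is a set with a binary operation such that all left and right translations $L_a:b\mapsto ab$, $R_a:b\mapsto ba$ are bijections and there is a two-sided identity $1$. The inner mapping group is the stabilizer of $1$ in the group generated by all translations; $Q$ is automorphic if all inner mappings are automorphisms. The associator $(a,b,c)$ is defined by $(ab)c=(a(bc))(a,b,c)$. The center $Z(Q)$ is the set of elements fixed by all inner mappings; $Z_0=1$, $Z_{i+1}(Q)$ is the preimage of $Z(Q/Z_i(Q))$, and $Q$ has nilpotency class $n$ if $Z_{n-1}(Q)\neq Q=Z_n(Q)$. *)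

From mathcomp Require Import ssreflect ssrfun ssrbool.
From Stdlib Require Import ClassicalEpsilon.

Set Implicit Arguments.
Unset Strict Implicit.

Record loop : Type := Loop {
  lcar :> Type;
  lmul : lcar -> lcar -> lcar;
  lone : lcar;
  lone_l : forall x, lmul lone x = x;
  lone_r : forall x, lmul x lone = x;
  lL_bij : forall a, bijective (lmul a);
  lR_bij : forall a, bijective (fun x => lmul x a)
}.

Section LoopDefs.
Variable Q : loop.
Local Notation "x * y" := (lmul x y).
Local Notation "1" := (lone Q).

Lemma bij_inv_ex (f : Q -> Q) : bijective f ->
  exists g : Q -> Q, cancel f g /\ cancel g f.
Proof. by case=> g fg gf; exists g. Qed.

Definition ldiv (a : Q) : Q -> Q :=
  proj1_sig (constructive_indefinite_description _ (bij_inv_ex (lL_bij a))).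

Definition assoc (a b c : Q) : Q := ldiv (a * (b * c)) ((a * b) * c).

(* Congruence modulo a subset N (intended: a normal subloop):
   x ~ y iff x lies in the coset yN, i.e. x = y n with n in N.
   This is the equality of the quotient loop Q/N on representatives. *)
Definition cong (N : Q -> Prop) (x y : Q) : Prop := exists n, N n /\ x = y * n.

(* The multiplication group of Q/N, represented by maps on Q acting on
   representatives: generated by all left and right translations, closed
   under composition and under taking inverses (modulo ~N). For N = {1}
   the relation ~N is equality and this is exactly the group Mlt(Q)
   generated by all translations. *)
Inductive mlt (N : Q -> Prop) : (Q -> Q) -> Prop :=
  | mlt_L a : mlt N (lmul a)
  | mlt_R a : mlt N (fun x => x * a)
  | mlt_comp f g : mlt N f -> mlt N g -> mlt N (fun x => f (g x))
  | mlt_inv f g : mlt N f ->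
      (forall x y, cong N x y -> cong N (g x) (g y)) ->
      (forall x, cong N (f (g x)) x) -> (forall x, cong N (g (f x)) x) ->
      mlt N g.

Definition inner_map (N : Q -> Prop) (f : Q -> Q) : Prop :=
  mlt N f /\ cong N (f 1) 1.

(* Upper central series: Z_0 = 1, Z_{i+1} = preimage of Z(Q/Z_i), where the
   center of Q/Z_i is the set of elements fixed by all inner mappings. *)
Fixpoint upper_center (i : nat) : Q -> Prop :=
  match i with
  | 0 => fun x => x = 1
  | S i' => fun x => forall f, inner_map (upper_center i') f ->
                      cong (upper_center i') (f x) x
  end.

Definition center : Q -> Prop := upper_center 1.

Definition nilpotency_class (n : nat) : Prop :=
  (exists x, ~ upper_center (Nat.pred n) x) /\ (forall x, upper_center n x).

(* Automorphic: every inner mapping of Q is an automorphism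
   (inner mappings are bijections by construction). *)
Definition automorphic : Prop :=
  forall f, inner_map (fun x => x = 1) f -> forall x y, f (x * y) = f x * f y.

End LoopDefs.

(* Each identity comes from one inner mapping [f]: [R(c,d)] for (i), the
   middle map [w |-> a \ (((a w) d) / d)] for (ii) and [L(a,b)^-1] for (iii).
   Whenever the associator [e x] involving [x] in the relevant slot is central,
   [f x = x e x]; since [f] is an automorphism,
   [f (x y) = (x e x) (y e y) = (x y) (e x e y)], and comparing with the
   defining equation of the associator gives the claim. *)
From mathcomp Require Import ssreflect ssrfun.
From Stdlib Require Import ClassicalEpsilon.

Section LoopDivision.
Context {Q : loop}.
Local Notation "x * y" := (lmul x y).
Local Notation "1" := (lone Q).

Definition rdiv (a : Q) : Q -> Q :=
  proj1_sig (constructive_indefinite_description _ (bij_inv_ex (lR_bij a))).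

Lemma lmulK (a : Q) : cancel (lmul a) (ldiv a).
Proof. by rewrite /ldiv; case: constructive_indefinite_description => g []. Qed.

Lemma ldivK (a : Q) : cancel (ldiv a) (lmul a).
Proof. by rewrite /ldiv; case: constructive_indefinite_description => g []. Qed.

Lemma rmulK (a : Q) : cancel (fun x => x * a) (rdiv a).
Proof. by rewrite /rdiv; case: constructive_indefinite_description => g []. Qed.

Lemma rdivK (a : Q) : cancel (rdiv a) (fun x => x * a).
Proof. by rewrite /rdiv; case: constructive_indefinite_description => g []. Qed.

Lemma ldivv (a : Q) : ldiv a a = 1.
Proof. by rewrite -{2}(lone_r a) lmulK. Qed.

Lemma rdivv (a : Q) : rdiv a a = 1.
Proof. by rewrite -{2}(lone_l a) (rmulK a 1). Qed.

Lemma lmul_inj (a : Q) : injective (lmul a).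
Proof. exact: can_inj (lmulK a). Qed.

Lemma rmul_inj (a x y : Q) : x * a = y * a -> x = y.
Proof. by move=> eq_xy; rewrite -(rmulK a x) -(rmulK a y) /= eq_xy. Qed.

Lemma assocP (x y z : Q) : (x * y) * z = (x * (y * z)) * assoc x y z.
Proof. by rewrite /assoc ldivK. Qed.

Lemma assoc_eq (x y z w : Q) :
  (x * y) * z = (x * (y * z)) * w -> assoc x y z = w.
Proof. by move=> def_xyz; rewrite /assoc def_xyz lmulK. Qed.

End LoopDivision.

Section InnerMappings.
Context {Q : loop}.
Local Notation "x * y" := (lmul x y).
Local Notation "1" := (lone Q).
Local Notation mlt1 := (mlt (fun x : Q => x = 1)).
Local Notation inner_map1 := (inner_map (fun x : Q => x = 1)).

Lemma cong1_refl (x : Q) : cong (fun x => x = 1) x x.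
Proof. by exists 1; rewrite lone_r. Qed.

(* Modulo the trivial subloop the congruence is equality, so the closure of
   [mlt] under inverses specializes to two-sided inverses. *)
Lemma mlt1_cancel {f g : Q -> Q} : mlt1 f -> cancel f g -> cancel g f -> mlt1 g.
Proof.
move=> mlt_f fK gK; apply: (mlt_inv mlt_f).
- by move=> x y [n [-> ->]]; rewrite lone_r; apply: cong1_refl.
- by move=> x; rewrite gK; apply: cong1_refl.
- by move=> x; rewrite fK; apply: cong1_refl.
Qed.

Lemma mlt1_ldiv (a : Q) : mlt1 (ldiv a).
Proof. exact: mlt1_cancel (mlt_L _ a) (lmulK a) (ldivK a). Qed.

Lemma mlt1_rdiv (a : Q) : mlt1 (rdiv a).
Proof. exact: mlt1_cancel (mlt_R _ a) (rmulK a) (rdivK a). Qed.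

Lemma inner_map1P (f : Q -> Q) : mlt1 f -> f 1 = 1 -> inner_map1 f.
Proof. by move=> mlt_f f1; split=> //; rewrite f1; apply: cong1_refl. Qed.

Definition innerL (x y w : Q) : Q := ldiv (x * y) (x * (y * w)).
Definition innerR (x y w : Q) : Q := rdiv (x * y) ((w * x) * y).
Definition innerT (x w : Q) : Q := rdiv x (x * w).
Definition innerM (x y w : Q) : Q := rdiv y (ldiv x ((x * w) * y)).
Definition innerLV (x y w : Q) : Q := ldiv y (ldiv x ((x * y) * w)).

Lemma innerLP (x y w : Q) : x * (y * w) = (x * y) * innerL x y w.
Proof. by rewrite /innerL ldivK. Qed.

Lemma innerRP (x y w : Q) : (w * x) * y = innerR x y w * (x * y).
Proof. by rewrite /innerR (rdivK (x * y)). Qed.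

Lemma innerTP (x w : Q) : x * w = innerT x w * x.
Proof. by rewrite /innerT (rdivK x). Qed.

Lemma innerMP (x y w : Q) : (x * w) * y = x * (innerM x y w * y).
Proof. by rewrite /innerM (rdivK y) ldivK. Qed.

Lemma innerLVP (x y w : Q) : (x * y) * w = x * (y * innerLV x y w).
Proof. by rewrite /innerLV !ldivK. Qed.

Lemma innerL_inner (x y : Q) : inner_map1 (innerL x y).
Proof.
apply: inner_map1P; last by rewrite /innerL lone_r ldivv.
apply: mlt_comp (mlt1_ldiv (x * y)) _.
exact: mlt_comp (mlt_L _ x) (mlt_L _ y).
Qed.

Lemma innerR_inner (x y : Q) : inner_map1 (innerR x y).
Proof.
apply: inner_map1P; last by rewrite /innerR lone_l rdivv.
apply: mlt_comp; first exact: mlt1_rdiv.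
by apply: mlt_comp (mlt_R _ y) (mlt_R _ x).
Qed.

Lemma innerT_inner (x : Q) : inner_map1 (innerT x).
Proof.
apply: inner_map1P; last by rewrite /innerT lone_r rdivv.
exact: mlt_comp (mlt1_rdiv x) (mlt_L _ x).
Qed.

Lemma innerM_inner (x y : Q) : inner_map1 (innerM x y).
Proof.
apply: inner_map1P; last by rewrite /innerM lone_r lmulK rdivv.
apply: mlt_comp (mlt1_rdiv y) _; apply: mlt_comp (mlt1_ldiv x) _.
exact: mlt_comp (mlt_R _ y) (mlt_L _ x).
Qed.

Lemma innerLV_inner (x y : Q) : inner_map1 (innerLV x y).
Proof.
apply: inner_map1P; last by rewrite /innerLV lone_r lmulK ldivv.
apply: mlt_comp (mlt1_ldiv y) _.
exact: mlt_comp (mlt1_ldiv x) (mlt_L _ (x * y)).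
Qed.

End InnerMappings.

Section Center.
Context {Q : loop}.
Local Notation "x * y" := (lmul x y).

Lemma center_fix {z : Q} {f : Q -> Q} :
  center z -> inner_map (fun x : Q => x = lone Q) f -> f z = z.
Proof. by move=> Zz /Zz [n [-> ->]]; rewrite lone_r. Qed.

Lemma mul_centerA (x y : Q) {z : Q} : center z -> x * (y * z) = (x * y) * z.
Proof. by move=> Zz; rewrite innerLP (center_fix Zz (innerL_inner x y)). Qed.

Lemma mul_centerAC (x y : Q) {z : Q} : center z -> (x * z) * y = (x * y) * z.
Proof.
move=> Zz; have commz w : w * z = z * w.
  by rewrite innerTP (center_fix Zz (innerT_inner w)).
by rewrite commz innerRP (center_fix Zz (innerR_inner x y)) commz.
Qed.

Lemma center_mul {z1 z2 : Q} :
  automorphic Q -> center z1 -> center z2 -> center (z1 * z2).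
Proof.
move=> autQ Zz1 Zz2 f inner_f.
by rewrite (autQ f inner_f) (center_fix Zz1 inner_f) (center_fix Zz2 inner_f);
  apply: cong1_refl.
Qed.

Lemma mul_center_shift (x y : Q) {z1 z2 : Q} :
  center z1 -> center z2 -> (x * z1) * (y * z2) = (x * y) * (z1 * z2).
Proof.
by move=> Zz1 Zz2; rewrite !(mul_centerA _ _ Zz2) (mul_centerAC _ _ Zz1).
Qed.

End Center.

Section CentralAssociators.
Context {Q : loop}.
Hypothesis autQ : automorphic Q.
Local Notation "x * y" := (lmul x y).

Lemma assoc_mull (a b c d : Q) :
  center (assoc a c d) -> center (assoc b c d) ->
  assoc (a * b) c d = assoc a c d * assoc b c d.
Proof.
move=> Za Zb; set f := innerR c d.
have fE x : center (assoc x c d) -> f x = x * assoc x c d.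
  move=> Zx; apply: (rmul_inj (c * d)).
  by rewrite -innerRP assocP (mul_centerAC _ _ Zx).
have Zab := center_mul autQ Za Zb.
apply: assoc_eq; rewrite innerRP (autQ _ (innerR_inner c d)) -/f (fE a Za) (fE b Zb).
by rewrite (mul_center_shift _ _ Za Zb) (mul_centerAC _ _ Zab).
Qed.

Lemma assoc_mulm (a b c d : Q) :
  center (assoc a b d) -> center (assoc a c d) ->
  assoc a (b * c) d = assoc a b d * assoc a c d.
Proof.
move=> Zb Zc; set f := innerM a d.
have fE x : center (assoc a x d) -> f x = x * assoc a x d.
  move=> Zx; apply: (rmul_inj d); apply: (lmul_inj a).
  by rewrite -innerMP assocP (mul_centerAC _ _ Zx) (mul_centerA _ _ Zx).
have Zbc := center_mul autQ Zb Zc.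
apply: assoc_eq; rewrite innerMP (autQ _ (innerM_inner a d)) -/f (fE b Zb) (fE c Zc).
by rewrite (mul_center_shift _ _ Zb Zc) (mul_centerAC _ _ Zbc) (mul_centerA _ _ Zbc).
Qed.

Lemma assoc_mulr (a b c d : Q) :
  center (assoc a b c) -> center (assoc a b d) ->
  assoc a b (c * d) = assoc a b c * assoc a b d.
Proof.
move=> Zc Zd; set f := innerLV a b.
have fE x : center (assoc a b x) -> f x = x * assoc a b x.
  move=> Zx; apply: (lmul_inj b); apply: (lmul_inj a).
  by rewrite -innerLVP assocP !(mul_centerA _ _ Zx).
have Zcd := center_mul autQ Zc Zd.
apply: assoc_eq; rewrite innerLVP (autQ _ (innerLV_inner a b)) -/f (fE c Zc) (fE d Zd).
by rewrite (mul_center_shift _ _ Zc Zd) !(mul_centerA _ _ Zcd).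
Qed.

End CentralAssociators.

Theorem lemma2p4 (Q : loop) (HA : automorphic Q) (Hn : nilpotency_class Q 3)
  (a b c d : Q) :
  (center (assoc a c d) -> center (assoc b c d) ->
     assoc (lmul a b) c d = lmul (assoc a c d) (assoc b c d)) /\
  (center (assoc a b d) -> center (assoc a c d) ->
     assoc a (lmul b c) d = lmul (assoc a b d) (assoc a c d)) /\
  (center (assoc a b c) -> center (assoc a b d) ->
     assoc a b (lmul c d) = lmul (assoc a b c) (assoc a b d)).
Proof.
split; first exact: assoc_mull.
by split; [apply: assoc_mulm | apply: assoc_mulr].
Qed.
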